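(* Let $G$ be an edge-colored graph of order $n\geq 3$. If $e(G)+c(G)\geq\binom{n+1}{2}$ and $G$ contains exactly one rainbow triangle, then $G$ belongs to $\mathcal{G}_1$.
   Context: An edge-colored graph is a finite simple graph $G$ with a map $C:E(G)\to\mathbb{N}$. $e(G)=|E(G)|$, $c(G)$ is the number of distinct colors appearing on $E(G)$. A subgraph is rainbow if all its edges have distinct colors, monochromatic if all its edges have the same color. For disjoint $S,S'\subseteq V(G)$, $G[S,S']$ is the bipartite subgraph with classes $S,S'$ and all edges of $G$ between them. The family $\mathcal{G}_0$ of edge-colored complete graphs is defined recursively: $K_1\in\mathcal{G}_0$; an edge-colored complete graph $G$ of order $n\ge 2$ belongs to $\mathcal{G}_0$ iff $c(G)=n-1$ and there is a partition $V(G)=V_1\cup V_2$ into nonempty sets with $G[V_1,V_2]$ monochromatic and $G[V_i]\in\mathcal{G}_0$ for $i=1,2$. The family $\mathcal{G}_1$ of edge-colored complete graphs is defined by: the rainbow triangle (complete graph on 3 vertices with 3 distinct colors) belongs to $\mathcal{G}_1$; an edge-colored complete graph $G$ of order $n\ge 4$ belongs to $\mathcal{G}_1$ iff $c(G)=n$ and there is a partition $V(G)=V_1\cup V_2$ into nonempty sets such that $G[V_1,V_2]$ is monochromatic, $G[V_1]\in\mathcal{G}_1$ and $G[V_2]\in\mathcal{G}_0$. *)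

From mathcomp Require Import all_boot.
Set Implicit Arguments. Unset Strict Implicit. Unset Printing Implicit Defensive.

(* An edge-colored simple graph on the finite vertex type T is given by an
   adjacency relation [adj] (assumed symmetric and irreflexive in the theorem)
   and a color function [col : T -> T -> nat] (assumed symmetric); only the
   values [col x y] with [adj x y] are meaningful: they form the coloring
   C : E(G) -> nat.  Subgraphs G[A] are induced subgraphs on A : {set T}. *)

Section EdgeColored.
Variables (T : finType) (adj : rel T) (col : T -> T -> nat).

Definition edges : {set {set T}} :=
  [set e : {set T} | [exists x, exists y, adj x y && (e == [set x; y])]].

Definition num_edges : nat := #|edges|.

Definition ncolors (A : {set T}) : nat :=
  size (undup [seq col p.1 p.2 |
               p <- [seq (x, y) | x <- enum A, y <- enum A] & adj p.1 p.2]).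

Definition complete_on (A : {set T}) : bool :=
  [forall x in A, forall y in A, (x != y) ==> adj x y].

Definition mono_between (V1 V2 : {set T}) : Prop :=
  forall x1 y1 x2 y2, x1 \in V1 -> y1 \in V2 -> x2 \in V1 -> y2 \in V2 ->
    adj x1 y1 -> adj x2 y2 -> col x1 y1 = col x2 y2.

Definition rainbow_triangle (S : {set T}) : bool :=
  (#|S| == 3) && complete_on S &&
  [forall x in S, forall y in S, forall x' in S, forall y' in S,
     [&& x != y, x' != y' & [set x; y] != [set x'; y']] ==>
       (col x y != col x' y')].

Definition nonempty_partition (A V1 V2 : {set T}) : bool :=
  [&& V1 != set0, V2 != set0, [disjoint V1 & V2] & V1 :|: V2 == A].

Inductive inG0 (A : {set T}) : Prop :=
| G0_K1 : #|A| = 1 -> inG0 A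
| G0_split : forall V1 V2 : {set T},
    2 <= #|A| -> complete_on A -> ncolors A = #|A| - 1 ->
    nonempty_partition A V1 V2 -> mono_between V1 V2 ->
    inG0 V1 -> inG0 V2 -> inG0 A.

Inductive inG1 (A : {set T}) : Prop :=
| G1_rainbow : rainbow_triangle A -> inG1 A
| G1_split : forall V1 V2 : {set T},
    4 <= #|A| -> complete_on A -> ncolors A = #|A| ->
    nonempty_partition A V1 V2 -> mono_between V1 V2 ->
    inG1 V1 -> inG0 V2 -> inG1 A.

End EdgeColored.

From mathcomp Require Import all_boot zify.
Set Implicit Arguments. Unset Strict Implicit. Unset Printing Implicit Defensive.

(* Write e(A) and c(A) for the numbers of edges and colours of G[A], and call a colour of
   G[A] fresh at v if it is missing from G[A - v].  If no vertex outside a clique X of G[A]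
   lies in a rainbow triangle, one of them, w, is light: its degree plus its number of fresh
   colours is at most |A|.  (Take v with most fresh colours; if it has two, fresh
   neighbours of v of different colours are non-adjacent, so one of them, u, lies outside
   X, and N(u) misses the fresh neighbours of v of colours other than col(v, u).)
   Deleting a light vertex preserves e + c + k >= C(|A|+1, 2), so by induction on |A| the
   graph G[A - w] is complete and lies in G_0 (k = 1, no rainbow triangle, X empty) or in
   G_1 (k = 0, a unique rainbow triangle X).  The bound then forces w to be joined to all
   of A - w and to carry exactly one fresh colour a.  Either all edges at w have colour a
   and (A - w, {w}) is the required split, or all a-neighbours of w lie on one side X of
   the monochromatic split (V1, V2) of A - w; an edge from w to the other side Y then has
   the colour of the parallel edge from any a-neighbour, so (X + w, Y) is a monochromatic
   split, and X + w again satisfies the bound. *)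

Lemma set_card_ind (T : finType) (P : {set T} -> Prop) :
  (forall A : {set T}, (forall B : {set T}, #|B| < #|A| -> P B) -> P A) ->
  forall A, P A.
Proof.
move=> IH A; have [k] := ubnP #|A|; elim: k A => // k IHk A ltAk.
by apply: IH => B ltBA; apply: IHk; apply: leq_trans ltBA _.
Qed.

Lemma setU1_neq0 (T : finType) (v : T) (X : {set T}) : v |: X != set0.
Proof. by apply/set0Pn; exists v; rewrite setU11. Qed.

Lemma set2_neq (T : finType) (x y x' y' : T) :
  x \notin [set x'; y'] -> [set x; y] != [set x'; y'].
Proof. by apply: contraNneq => <-; rewrite set21. Qed.

Lemma bin2S k : 'C(k.+1, 2) = 'C(k, 2) + k.
Proof. by rewrite binS bin1. Qed.

Section EdgeColoring.
Variables (T : finType) (adj : rel T) (col : T -> T -> nat).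
Hypothesis adjC : forall x y, adj x y = adj y x.
Hypothesis adj_irr : forall x, ~~ adj x x.
Hypothesis colC : forall x y, col x y = col y x.
Implicit Types (A B X Y S : {set T}) (u v w x y : T).

Local Notation ncolors := (ncolors adj col).
Local Notation complete := (complete_on adj).
Local Notation mono := (mono_between adj col).

Lemma adj_neq x y : adj x y -> x != y.
Proof. by apply: contraTneq => ->; apply: adj_irr. Qed.

Definition colors A : seq nat :=
  undup [seq col p.1 p.2 | p <- [seq (x, y) | x <- enum A, y <- enum A] & adj p.1 p.2].

Lemma size_colors A : size (colors A) = ncolors A. Proof. by []. Qed.

Lemma colors_uniq A : uniq (colors A). Proof. exact: undup_uniq. Qed.

Lemma colorsP A a :
  reflect (exists x y, [/\ x \in A, y \in A, adj x y & col x y = a]) (a \in colors A).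
Proof.
rewrite mem_undup; apply: (iffP mapP) => [[[x y]]|[x [y [xA yA axy <-]]]].
  rewrite mem_filter => /andP[/= axy /allpairsP[[x' y'] /= [x'A y'A [ex ey]]]] ->.
  by subst; rewrite !mem_enum in x'A y'A; exists x', y'.
by exists (x, y); rewrite // mem_filter /= axy; apply/allpairsP; exists (x, y); rewrite !mem_enum.
Qed.

Lemma mem_colors A x y : x \in A -> y \in A -> adj x y -> col x y \in colors A.
Proof. by move=> xA yA axy; apply/colorsP; exists x, y. Qed.

Lemma sub_colors B A : B \subset A -> {subset colors B <= colors A}.
Proof.
move=> /subsetP sBA a /colorsP[x [y [xB yB axy <-]]].
exact: mem_colors (sBA _ xB) (sBA _ yB) axy.
Qed.

Lemma ncolors_ltn B A a : B \subset A -> a \in colors A -> a \notin colors B ->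
  ncolors B < ncolors A.
Proof.
move=> sBA aA aB; rewrite -!size_colors -[_.+1]/(size (a :: colors B)).
apply: uniq_leq_size => [|b]; first by rewrite /= aB colors_uniq.
by rewrite inE => /predU1P[->|/(sub_colors sBA)].
Qed.

Lemma ncolors_set0 : ncolors set0 = 0.
Proof.
rewrite -size_colors; case: (colors set0) (@colorsP set0) => [|a s] // /(_ a).
by rewrite inE eqxx => /elimT/(_ isT)[x [y []]]; rewrite inE.
Qed.

Definition nedges A := #|[set e in edges adj | e \subset A]|.
Definition degree A v := #|[set u in A | adj v u]|.

Lemma edgesP e : reflect (exists x y, adj x y /\ e = [set x; y]) (e \in edges adj).
Proof.
rewrite inE; apply: (iffP existsP) => [[x /existsP[y /andP[axy /eqP ->]]]|[x [y [axy ->]]]].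
  by exists x, y.
by exists x; apply/existsP; exists y; rewrite axy eqxx.
Qed.

Lemma nedgesD1 A v : v \in A -> nedges A = nedges (A :\ v) + degree A v.
Proof.
move=> vA; rewrite /nedges -(cardsID [set e : {set T} | v \in e]) addnC.
congr (_ + _).
  apply: eq_card => e; rewrite !inE subsetD1.
  by case: (v \in e); case: (e \subset A); rewrite /= ?andbF ?andbT.
rewrite /degree -(@card_in_imset _ _ (fun u => [set v; u])); last first.
  move=> u u' /[!inE] /andP[_ avu] /andP[_ avu'] /setP /(_ u').
  rewrite !inE eqxx orbT => /predU1P[u'v|/eqP //].
  by move: avu'; rewrite u'v (negbTE (adj_irr v)).
apply: eq_card => e; rewrite in_setI 2!in_set; apply/idP/imsetP.
  case/andP=> /andP[/edgesP[x [y [axy ->]]] sA]; rewrite !inE.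
  case/orP=> /eqP vx; subst v.
    by exists y; rewrite // inE axy (subsetP sA) // !inE eqxx orbT.
  by exists x; rewrite 1?setUC // inE adjC axy (subsetP sA) // !inE eqxx.
case=> u /setIdP[uA avu] ->; rewrite set21 andbT.
apply/andP; split; first by apply/edgesP; exists v, u.
by apply/subsetP => x /[!inE] /orP[] /eqP ->.
Qed.

Lemma degree_le A v : degree A v <= #|A :\ v|.
Proof.
apply/subset_leq_card/subsetP => u /[!inE] /andP[uA avu].
by rewrite uA eq_sym adj_neq.
Qed.

Lemma nedges_set0 : nedges set0 = 0.
Proof.
apply/eqP; rewrite cards_eq0; apply/eqP/setP => e; rewrite in_set0.
by apply/setIdP => -[/edgesP[x [y [_ ->]]] /subsetP/(_ x)]; rewrite set21 inE => /(_ isT).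
Qed.

Lemma nedges_le A : nedges A <= 'C(#|A|, 2).
Proof.
elim/set_card_ind: A => A IH; have [->|[v vA]] := set_0Vmem A.
  by rewrite nedges_set0.
have := IH _ (proper_card (properD1 vA)); have := degree_le A v.
rewrite (nedgesD1 vA) [#|A|](cardsD1 v A) vA add1n bin2S; lia.
Qed.

Lemma completeP A x y : complete A -> x \in A -> y \in A -> x != y -> adj x y.
Proof. by move=> /forall_inP/(_ x) cA /cA/forall_inP/(_ y) cxA /cxA/implyP. Qed.

Lemma complete_sub B A : B \subset A -> complete A -> complete B.
Proof.
move=> /subsetP sBA cA; apply/forall_inP => x xB; apply/forall_inP => y yB.
exact/implyP/(completeP cA (sBA _ xB) (sBA _ yB)).
Qed.

Lemma complete_set0 : complete set0.
Proof. by apply/forall_inP => x; rewrite inE. Qed.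

Lemma complete_card_le1 A : #|A| <= 1 -> complete A.
Proof.
move=> A1; apply/forall_inP => x xA; apply/forall_inP => y yA.
by rewrite (card_le1_eqP A1 x y xA yA) eqxx.
Qed.

Lemma degree_complete A v : complete A -> v \in A -> degree A v = #|A :\ v|.
Proof.
move=> cA vA; apply: eq_card => u; rewrite !inE andbC.
have [->|uv] /= := eqVneq u v; first by rewrite (negbTE (adj_irr v)).
by case: (boolP (u \in A)) => uA; rewrite ?andbT ?andbF // (completeP cA vA uA) // eq_sym.
Qed.

Lemma nedges_complete A : complete A -> nedges A = 'C(#|A|, 2).
Proof.
elim/set_card_ind: A => A IH cA; have [->|[v vA]] := set_0Vmem A.
  by rewrite nedges_set0 cards0.
rewrite (nedgesD1 vA) (degree_complete cA vA) IH ?(proper_card (properD1 vA)) //.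
  by rewrite [#|A|](cardsD1 v A) vA add1n bin2S.
exact: complete_sub (subD1set A v) cA.
Qed.

Definition fresh_colors A v := [seq a <- colors A | a \notin colors (A :\ v)].
Definition fresh_nbrs A v := [set u in A | adj v u & col v u \notin colors (A :\ v)].

Lemma fresh_colors_uniq A v : uniq (fresh_colors A v).
Proof. exact/filter_uniq/colors_uniq. Qed.

Lemma ncolorsD1_le A v : ncolors A <= ncolors (A :\ v) + size (fresh_colors A v).
Proof.
rewrite -!size_colors -size_cat; apply: uniq_leq_size (colors_uniq _) _ => a aA.
by rewrite mem_cat mem_filter aA andbT; case: (a \in colors _).
Qed.

Lemma fresh_nbrsD1 A v u : u \in fresh_nbrs A v -> u \in A :\ v.
Proof. by case/setIdP=> uA /andP[/adj_neq vu _]; rewrite in_setD1 eq_sym vu. Qed.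

Lemma fresh_colorsP A v a :
  a \in fresh_colors A v -> exists2 u, u \in fresh_nbrs A v & col v u = a.
Proof.
rewrite mem_filter => /andP[aA' /colorsP[x [y [xA yA axy eca]]]].
have [xv|vx] := eqVneq x v; first by subst x; exists y; rewrite // !inE yA axy eca.
have [yv|vy] := eqVneq y v.
  by subst y; exists x; rewrite 1?colC // !inE xA adjC axy colC eca.
by rewrite -eca mem_colors ?in_setD1 ?vx ?vy in aA'.
Qed.

Lemma size_fresh_colors_le A v : size (fresh_colors A v) <= #|fresh_nbrs A v|.
Proof.
rewrite cardE -(size_map (col v)); apply: uniq_leq_size (fresh_colors_uniq _ _) _.
by move=> a /fresh_colorsP[u uP <-]; apply: map_f; rewrite mem_enum.
Qed.

Lemma size_fresh_colors_leS A v u :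
  size (fresh_colors A v) <= #|[set w in fresh_nbrs A v | col v w != col v u]|.+1.
Proof.
rewrite cardE -(size_map (col v)) -[_.+1]/(size (col v u :: _)).
apply: uniq_leq_size (fresh_colors_uniq _ _) _ => a /fresh_colorsP[w wP <-].
rewrite inE; have [//|neq] := eqVneq (col v w) (col v u).
by apply/orP; right; apply: map_f; rewrite mem_enum inE wP neq.
Qed.

Lemma fresh_nbrs_le_degree A v : #|fresh_nbrs A v| <= degree A v.
Proof. by apply/subset_leq_card/subsetP => u /[!inE] /and3P[-> ->]. Qed.

Lemma ncolors_le_nedges A : ncolors A <= nedges A.
Proof.
elim/set_card_ind: A => A IH; have [->|[v vA]] := set_0Vmem A.
  by rewrite ncolors_set0.
have := IH _ (proper_card (properD1 vA)); have := ncolorsD1_le A v.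
have := size_fresh_colors_le A v.
have := fresh_nbrs_le_degree A v; rewrite (nedgesD1 vA); lia.
Qed.

Lemma nedges_ncolorsD1 A v : v \in A ->
  nedges A + ncolors A <=
  nedges (A :\ v) + ncolors (A :\ v) + degree A v + size (fresh_colors A v).
Proof. by move=> vA; have := ncolorsD1_le A v; rewrite (nedgesD1 vA); lia. Qed.

Definition rainbow_free_at A v : Prop :=
  forall u w, u \in A -> w \in A -> adj v u -> adj v w -> adj u w ->
  col v u != col v w -> col v u != col u w -> col v w != col u w -> False.

Definition rainbow_triangles A := [set S | rainbow_triangle adj col S & S \subset A].

Lemma rainbow_trianglesS B A : B \subset A -> rainbow_triangles B \subset rainbow_triangles A.
Proof.
move=> sBA; apply/subsetP => S /setIdP[rS sSB].
by rewrite inE rS (subset_trans sSB sBA).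
Qed.

Lemma rainbow_triangle_card S : rainbow_triangle adj col S -> #|S| = 3.
Proof. by case/andP => /andP[/eqP]. Qed.

Lemma rainbow_triangle_complete S : rainbow_triangle adj col S -> complete S.
Proof. by case/andP => /andP[]. Qed.

Lemma rainbow_triangle_col S x y x' y' : rainbow_triangle adj col S ->
  x \in S -> y \in S -> x' \in S -> y' \in S -> x != y -> x' != y' ->
  [set x; y] != [set x'; y'] -> col x y != col x' y'.
Proof.
case/andP=> _ /forall_inP rS xS yS x'S y'S xy x'y' ne.
move: (rS x xS) => /forall_inP/(_ y yS)/forall_inP/(_ x' x'S)/forall_inP/(_ y' y'S).
by rewrite xy x'y' ne.
Qed.

Lemma rainbow_triangle3 x y z : adj x y -> adj x z -> adj y z ->
  col x y != col x z -> col x y != col y z -> col x z != col y z ->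
  rainbow_triangle adj col [set x; y; z].
Proof.
move=> axy axz ayz c1 c2 c3.
have [xy xz yz] := And3 (adj_neq axy) (adj_neq axz) (adj_neq ayz).
apply/andP; split; [apply/andP; split|].
- by rewrite -setUA cardsU1 cards2 !inE negb_or xy xz yz.
- apply/forall_inP => a /[!inE] /orP[/orP[]|] /eqP ->;
  apply/forall_inP => b /[!inE] /orP[/orP[]|] /eqP ->;
  by rewrite ?eqxx //= ?(adjC y x) ?(adjC z x) ?(adjC z y) ?axy ?axz ?ayz ?implybT.
- apply/forall_inP => a /[!inE] /orP[/orP[]|] /eqP ->;
  apply/forall_inP => b /[!inE] /orP[/orP[]|] /eqP ->;
  apply/forall_inP => a' /[!inE] /orP[/orP[]|] /eqP ->;
  apply/forall_inP => b' /[!inE] /orP[/orP[]|] /eqP ->;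
  rewrite ?eqxx ?andbF //= ?(setUC [set y] [set x]) ?(setUC [set z] [set x])
    ?(setUC [set z] [set y]) ?eqxx ?andbF // ?[col y x]colC ?[col z x]colC
    ?[col z y]colC ?c1 ?c2 ?c3 ?(eq_sym (col x z)) ?(eq_sym (col y z))
    ?c1 ?c2 ?c3 ?implybT //.
Qed.

Lemma rainbow_free_outside A S v : rainbow_triangles A \subset [set S] -> v \in A :\: S ->
  rainbow_free_at A v.
Proof.
move=> /subsetP rA /setDP[vA vS] u w uA wA avu avw auw c1 c2 c3.
have /rA/set1P eS : [set v; u; w] \in rainbow_triangles A.
  rewrite inE rainbow_triangle3 //=.
  by apply/subsetP => x /[!inE] /orP[/orP[]|] /eqP ->.
by move: vS; rewrite -eS !inE eqxx.
Qed.

Lemma fresh_nbrs_nonadj A v u w : rainbow_free_at A v ->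
  u \in fresh_nbrs A v -> w \in fresh_nbrs A v -> col v u != col v w -> ~~ adj u w.
Proof.
move=> rfv uP wP cuw; apply/negP => auw.
have old := mem_colors (fresh_nbrsD1 uP) (fresh_nbrsD1 wP) auw.
case/setIdP: uP => uA /andP[avu nu]; case/setIdP: wP => wA /andP[avw nw].
by apply: (rfv u w uA wA avu avw auw cuw); [apply: contraNneq nu | apply: contraNneq nw] => ->.
Qed.

Lemma two_fresh_nbrs A v : 1 < size (fresh_colors A v) ->
  exists u w, [/\ u \in fresh_nbrs A v, w \in fresh_nbrs A v & col v u != col v w].
Proof.
case E: (fresh_colors A v) (fresh_colors_uniq A v) => [|a [|b s]] //=.
rewrite inE negb_or => /andP[/andP[ab _] _] _.
have /fresh_colorsP[u uP ua] : a \in fresh_colors A v by rewrite E mem_head.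
have /fresh_colorsP[w wP wb] : b \in fresh_colors A v by rewrite E !inE eqxx orbT.
by exists u, w; rewrite ua wb.
Qed.

Lemma size_fresh_colors_complete A v : rainbow_free_at A v -> complete (A :\ v) ->
  size (fresh_colors A v) <= 1.
Proof.
move=> rfv cA'; rewrite leqNgt; apply/negP => /two_fresh_nbrs[u [w [uP wP cuw]]].
have /negP[] := fresh_nbrs_nonadj rfv uP wP cuw.
by apply: completeP cA' (fresh_nbrsD1 uP) (fresh_nbrsD1 wP) _; apply: contraNneq cuw => ->.
Qed.

Lemma degree_add_fresh_le A v u : rainbow_free_at A v -> u \in fresh_nbrs A v ->
  degree A u + size (fresh_colors A v) <= #|A|.
Proof.
move=> rfv uP; set Q := [set w in fresh_nbrs A v | col v w != col v u].
have uA : u \in A by case/setIdP: uP.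
have NQ : [set w in A | adj u w] :&: Q = set0.
  apply/setP => w; rewrite in_set0; apply/setIP => -[/setIdP[_ auw] /setIdP[wP cw]].
  by move: (fresh_nbrs_nonadj rfv uP wP); rewrite eq_sym auw => /(_ cw).
have sNQ : [set w in A | adj u w] :|: Q \subset A :\ u.
  apply/subsetP => w /setUP[/setIdP[wA auw] | /setIdP[wP cw]].
    by rewrite in_setD1 wA eq_sym adj_neq.
  have [_ wA] := setD1P (fresh_nbrsD1 wP).
  by rewrite in_setD1 wA andbT; apply: contraNneq cw => ->.
have := subset_leq_card sNQ; rewrite cardsU NQ cards0 subn0.
have := size_fresh_colors_leS A v u; rewrite -/Q [#|A|](cardsD1 u A) uA add1n /degree; lia.
Qed.

Lemma exists_light_vertex A X : complete X ->
  {in A :\: X, forall v, rainbow_free_at A v} -> A :\: X != set0 ->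
  exists2 v, v \in A :\: X & degree A v + size (fresh_colors A v) <= #|A|.
Proof.
move=> cX rfAX /set0Pn[v0 v0AX].
have [v vAX vmax] := arg_maxnP (fun v => size (fresh_colors A v)) v0AX.
have rfv := rfAX v vAX; have vA : v \in A by case/setDP: vAX.
have [nc1|/two_fresh_nbrs[u1 [u2 [u1P u2P cu]]]] := leqP (size (fresh_colors A v)) 1.
  by exists v => //; have := degree_le A v; rewrite [#|A|](cardsD1 v A) vA; lia.
have [u uP uX] : exists2 u, u \in fresh_nbrs A v & u \notin X.
  have := fresh_nbrs_nonadj rfv u1P u2P cu.
  have [u1X|] := boolP (u1 \in X); last by exists u1.
  have [u2X|] := boolP (u2 \in X); last by exists u2.
  by rewrite (completeP cX u1X u2X) //; apply: contraNneq cu => ->.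
have uAX : u \in A :\: X by have [_ uA] := setD1P (fresh_nbrsD1 uP); rewrite inE uX.
exists u => //; apply: leq_trans (degree_add_fresh_le rfv uP).
by rewrite leq_add2l; apply: vmax.
Qed.

(* [k] is added on the left so that [extremal 0 A] and [extremal 1 A] unfold by
   conversion to the bounds with [e + c] and [(e + c).+1]. *)
Definition extremal k A := 'C(#|A|.+1, 2) <= k + (nedges A + ncolors A).

Lemma extremalD1 A v k : v \in A -> degree A v + size (fresh_colors A v) <= #|A| ->
  extremal k A -> extremal k (A :\ v).
Proof.
rewrite /extremal => vA light; have := nedges_ncolorsD1 vA.
by rewrite [#|A|](cardsD1 v A) vA add1n in light *; rewrite !bin2S; lia.
Qed.

Lemma complete_extremal B k : complete B -> #|B| <= k + ncolors B -> extremal k B.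
Proof. by rewrite /extremal => cB; rewrite nedges_complete // bin2S; lia. Qed.

Lemma complete_setD1 A v : v \in A -> complete (A :\ v) -> degree A v = #|A :\ v| ->
  complete A.
Proof.
move=> vA cA' dv.
have Nv : [set u in A | adj v u] = A :\ v.
  apply/eqP; rewrite eqEcard; apply/andP; split; last by rewrite -dv /degree leqnn.
  by apply/subsetP => u /setIdP[uA avu]; rewrite in_setD1 uA eq_sym adj_neq.
have av u : u \in A :\ v -> adj v u by rewrite -Nv => /setIdP[].
apply/forall_inP => x xA; apply/forall_inP => y yA; apply/implyP => xy.
have [xv | xv] := eqVneq x v; first by subst x; apply: av; rewrite in_setD1 eq_sym xy.
have [yv | yv] := eqVneq y v; first by subst y; rewrite adjC; apply: av; rewrite in_setD1 xv.
by apply: (completeP cA'); rewrite ?in_setD1 ?xv ?yv.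
Qed.

Lemma extremal_add_vertex A v k : v \in A -> rainbow_free_at A v ->
  complete (A :\ v) -> k + ncolors (A :\ v) = #|A :\ v| -> extremal k A ->
  [/\ complete A, k + ncolors A = #|A| &
      exists2 u, u \in A :\ v & col v u \notin colors (A :\ v)].
Proof.
rewrite /extremal => vA rfv cA' nA' ext.
have nc1 := size_fresh_colors_complete rfv cA'.
have := ncolorsD1_le A v; have := degree_le A v.
move: ext; rewrite (nedgesD1 vA) (nedges_complete cA') [#|A|](cardsD1 v A) vA add1n.
rewrite !bin2S => ext dle cle.
have dv : degree A v = #|A :\ v| by lia.
split; [exact: complete_setD1 dv | lia |].
case E: (fresh_colors A v) nc1 cle => [|a [|]] //=; first by lia.
have /fresh_colorsP[u uP _] : a \in fresh_colors A v by rewrite E mem_head.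
exists u; first exact: fresh_nbrsD1 uP.
by case/setIdP: uP => _ /andP[].
Qed.

Section Partitions.
Variables (B X Y : {set T}).
Hypothesis npB : nonempty_partition B X Y.

Lemma partition_mem x : (x \in B) = (x \in X) || (x \in Y).
Proof. by case/and4P: npB => _ _ _ /eqP <-; rewrite in_setU. Qed.

Lemma partition_memF x : x \in X -> (x \in Y) = false.
Proof. by case/and4P: npB => _ _ /disjointFr dXY _ /dXY. Qed.

Lemma partition_card : #|B| = #|X| + #|Y|.
Proof.
by case/and4P: npB => _ _ dXY /eqP <-; rewrite cardsU (disjoint_setI0 dXY) cards0 subn0.
Qed.

Lemma partition_subl : X \subset B.
Proof. by apply/subsetP => x xX; rewrite partition_mem xX. Qed.

Lemma partition_subr : Y \subset B.
Proof. by apply/subsetP => y yY; rewrite partition_mem yY orbT. Qed.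

Lemma partition_sym : nonempty_partition B Y X.
Proof.
case/and4P: npB => nX nY dXY /eqP eB.
by rewrite /nonempty_partition nX nY disjoint_sym dXY setUC eB eqxx.
Qed.

Lemma partition_adj x y : complete B -> x \in X -> y \in Y -> adj x y.
Proof.
move=> cB xX yY; apply: completeP cB _ _ _; rewrite ?partition_mem ?xX ?yY ?orbT //.
by apply: contraTneq yY => <-; rewrite partition_memF.
Qed.

End Partitions.

Lemma partition_setU1 B X Y v : v \in B -> nonempty_partition (B :\ v) X Y ->
  nonempty_partition B (v |: X) Y.
Proof.
move=> vB npB'; have vY : v \notin Y.
  by apply: contraFN (setD11 v B); apply: subsetP (partition_subr npB') v.
case/and4P: npB' => _ nY dXY /eqP eB'; apply/and4P; split => //.
- exact: setU1_neq0.
- by rewrite disjoints_subset subUset sub1set inE vY -disjoints_subset dXY.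
- by rewrite -setUA eB' setD1K.
Qed.

Lemma partition_set1 B v : v \in B -> B :\ v != set0 -> nonempty_partition B (B :\ v) [set v].
Proof.
move=> vB nB'; apply/and4P; split => //.
- by apply/set0Pn; exists v; rewrite set11.
- by rewrite disjoint_sym disjoints1 setD11.
- by rewrite setUC setD1K.
Qed.

Lemma mono_betweenC X Y : mono X Y -> mono Y X.
Proof.
move=> mXY y1 x1 y2 x2 y1Y x1X y2Y x2X a1 a2.
by rewrite colC [col y2 x2]colC; apply: mXY; rewrite // adjC.
Qed.

Lemma mono_between_set1 B v a : {in B, forall x, col x v = a} -> mono B [set v].
Proof. by move=> Ba x1 y1 x2 y2 x1B /set1P-> x2B /set1P-> _ _; rewrite !Ba. Qed.

Lemma mono_pendantV A v a : v \in A -> A :\ v != set0 ->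
  nonempty_partition A (A :\ v) [set v] /\ mono (A :\ v) [set v] \/
  exists2 w, w \in A :\ v & col v w != a.
Proof.
move=> vA A'0; have [w /andP[wA' vw] | all_a] := pickP [pred x in A :\ v | col v x != a].
  by right; exists w.
left; split; first exact: partition_set1.
apply: (@mono_between_set1 _ _ a) => x xA'.
by move: (all_a x); rewrite /= xA' colC => /negbFE/eqP.
Qed.

Lemma colors_partition B X Y x y : nonempty_partition B X Y -> mono X Y ->
  x \in X -> y \in Y -> adj x y -> {subset colors B <= col x y :: colors X ++ colors Y}.
Proof.
move=> npB mXY xX yY axy c /colorsP[p [q [pB qB apq <-]]].
rewrite inE mem_cat; move: pB qB; rewrite !(partition_mem npB).
case/orP=> [pX|pY] /orP[qX|qY].
- by rewrite mem_colors ?orbT.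
- by rewrite (mXY p q x y) ?eqxx.
- by rewrite colC (mXY q p x y) ?eqxx // adjC.
- by rewrite (mem_colors pY qY apq) !orbT.
Qed.

Lemma ncolors_partition_le B X Y : complete B -> nonempty_partition B X Y -> mono X Y ->
  ncolors B <= (ncolors X + ncolors Y).+1.
Proof.
move=> cB npB mXY; case/and4P: (npB) => /set0Pn[x xX] /set0Pn[y yY] _ _.
rewrite -!size_colors -size_cat -[_.+1]/(size (col x y :: _)).
apply: uniq_leq_size (colors_uniq B) (colors_partition npB mXY xX yY _).
exact: (partition_adj npB cB xX yY).
Qed.

Lemma cross_color_fresh B X Y x y : complete B -> nonempty_partition B X Y -> mono X Y ->
  (ncolors X + ncolors Y).+1 <= ncolors B -> x \in X -> y \in Y ->
  col x y \notin colors X ++ colors Y.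
Proof.
move=> cB npB mXY ltB xX yY; apply/negP => cxy.
have sB := colors_partition npB mXY xX yY (partition_adj npB cB xX yY).
have : ncolors B <= ncolors X + ncolors Y.
  rewrite -!size_colors -size_cat; apply: uniq_leq_size (colors_uniq B) _ => c /sB.
  by rewrite inE => /predU1P[->|].
by rewrite leqNgt ltB.
Qed.

Section FreshVertex.
Variables (A : {set T}) (v : T) (a : nat).
Hypotheses (cA : complete A) (vA : v \in A) (rfv : rainbow_free_at A v).
Hypothesis a_fresh : a \notin colors (A :\ v).

Let cA' : complete (A :\ v) := complete_sub (subD1set A v) cA.

Lemma adj_setD1 x : x \in A :\ v -> adj v x.
Proof. by case/setD1P=> xv xA; apply: completeP cA vA xA _; rewrite eq_sym. Qed.

(* Otherwise the triangle v u x would be rainbow, since [col u x] is not the fresh [a]. *)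
Lemma fresh_color_transfer u x : u \in A :\ v -> x \in A :\ v ->
  col v u = a -> col v x != a -> col u x = col v x.
Proof.
move=> uA' xA' vua vxa; have ux : u != x by apply: contraNneq vxa => <-; apply/eqP.
have aux := completeP cA' uA' xA' ux.
have old := mem_colors uA' xA' aux.
apply/eqP/contraT => ne; exfalso.
have [[_ uA] [_ xA]] := (setD1P uA', setD1P xA').
apply: (rfv uA xA (adj_setD1 uA') (adj_setD1 xA') aux); rewrite ?vua 1?eq_sym //.
by apply: contraNneq a_fresh => <-.
Qed.

Lemma mono_between_setU1 X Y u : nonempty_partition (A :\ v) X Y -> mono X Y ->
  u \in X -> col v u = a -> {in Y, forall y, col v y != a} -> mono (v |: X) Y.
Proof.
move=> npA' mXY uX vua Ya.
have [sX sY] := (subsetP (partition_subl npA'), subsetP (partition_subr npA')).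
have lift x y : x \in v |: X -> y \in Y -> exists2 x', x' \in X & col x y = col x' y.
  move=> /setU1P[-> | xX] yY; last by exists x.
  by exists u; rewrite // (fresh_color_transfer (sX _ uX) (sY _ yY) vua (Ya _ yY)).
move=> x1 y1 x2 y2 x1X' y1Y x2X' y2Y _ _.
have [[x1' x1X ->] [x2' x2X ->]] := (lift _ _ x1X' y1Y, lift _ _ x2X' y2Y).
by apply: mXY => //; apply: (partition_adj npA' cA').
Qed.

Lemma fresh_color_not_both_sides X Y u1 u2 w : nonempty_partition (A :\ v) X Y -> mono X Y ->
  (ncolors X + ncolors Y).+1 <= ncolors (A :\ v) ->
  u1 \in X -> u2 \in Y -> w \in X -> col v u1 = a -> col v u2 = a -> col v w != a ->
  False.
Proof.
move=> npA' mXY ltc u1X u2Y wX vu1 vu2 vw.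
have [sX sY] := (subsetP (partition_subl npA'), subsetP (partition_subr npA')).
have e1 := fresh_color_transfer (sX _ u1X) (sX _ wX) vu1 vw.
have e2 := fresh_color_transfer (sY _ u2Y) (sX _ wX) vu2 vw.
have u1w : u1 != w by apply: contraNneq vw => <-; apply/eqP.
have := cross_color_fresh cA' npA' mXY ltc wX u2Y.
by rewrite mem_cat colC e2 -e1 (mem_colors u1X wX (completeP cA' (sX _ u1X) (sX _ wX) u1w)).
Qed.

Lemma fresh_color_sideV X Y : nonempty_partition (A :\ v) X Y -> mono X Y ->
  (ncolors X + ncolors Y).+1 <= ncolors (A :\ v) ->
  (exists2 w, w \in A :\ v & col v w != a) ->
  {in Y, forall y, col v y != a} \/ {in X, forall x, col v x != a}.
Proof.
move=> npA' mXY ltc [w wA' vw].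
have [/exists_inP[u2 u2Y /eqP vu2]|/exists_inPn Ya] := boolP [exists y in Y, col v y == a];
  last by left.
right=> u1 u1X; apply/eqP => vu1; move: wA'; rewrite (partition_mem npA').
case/orP=> [wX|wY]; first exact: fresh_color_not_both_sides npA' mXY ltc u1X u2Y wX vu1 vu2 vw.
apply: fresh_color_not_both_sides (partition_sym npA') (mono_betweenC mXY) _ u2Y u1X wY vu2 vu1 vw.
by rewrite addnC.
Qed.

Lemma extend_partition X Y u k : nonempty_partition (A :\ v) X Y -> mono X Y ->
  u \in A :\ v -> col v u = a -> {in Y, forall y, col v y != a} ->
  k + ncolors X = #|X| ->
  [/\ nonempty_partition A (v |: X) Y, mono (v |: X) Y, #|v |: X| < #|A|,
      v |: X \subset A & #|v |: X| <= k + ncolors (v |: X)].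
Proof.
move=> npA' mXY uA' vua Ya nX.
have uX : u \in X.
  by move: uA'; rewrite (partition_mem npA') => /orP[//|/Ya]; rewrite vua eqxx.
have sXA' := partition_subl npA'.
have vX : v \notin X by apply: contraFN (setD11 v A); apply: subsetP sXA' v.
have aX : a \in colors (v |: X) by rewrite -vua mem_colors ?setU11 ?setU1r ?adj_setD1.
have ltc := ncolors_ltn (subsetUr [set v] X) aX (contra (@sub_colors _ _ sXA' a) a_fresh).
have Y0 : 0 < #|Y| by case/and4P: npA' => _ nY _ _; rewrite card_gt0.
have cardA' := partition_card npA'.
rewrite cardsU1 vX [#|A|](cardsD1 v A) vA.
split; [exact: partition_setU1 | exact: mono_between_setU1 uX vua Ya | | |].
- by move: Y0 cardA'; clear; lia.
- by rewrite subUset sub1set vA (subset_trans sXA' (subD1set A v)).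
- by move: ltc nX; clear; lia.
Qed.

Lemma fresh_color_rainbow R u : rainbow_triangle adj col R -> R \subset A :\ v ->
  u \in R -> col v u = a -> {in R, forall x, col v x = a}.
Proof.
move=> rR /subsetP sR uR vua x xR; apply/eqP/contraT => vx; exfalso.
have ux : u != x by apply: contraNneq vx => <-; rewrite vua.
have [z] : exists z, z \in R :\ x :\ u.
  apply/set0Pn; rewrite -card_gt0; have := rainbow_triangle_card rR.
  by rewrite (cardsD1 x R) xR (cardsD1 u (R :\ x)) in_setD1 ux uR; lia.
rewrite !in_setD1 => /and3P[zu zx zR].
have [xu xz uz] : [/\ x != u, x != z & u != z] by split; rewrite eq_sym.
have notin (p q r : T) : p != q -> p != r -> p \notin [set q; r].
  by move=> pq pr; rewrite !inE negb_or pq pr.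
have e1 := fresh_color_transfer (sR _ uR) (sR _ xR) vua vx.
have rc := rainbow_triangle_col rR.
have [vza|vz] := eqVneq (col v z) a.
  have e2 := fresh_color_transfer (sR _ zR) (sR _ xR) vza vx.
  have := rc _ _ _ _ uR xR zR xR ux zx (set2_neq _ (notin _ _ _ uz ux)).
  by rewrite e1 e2 eqxx.
have e2 := fresh_color_transfer (sR _ uR) (sR _ zR) vua vz.
have [[_ xA] [_ zA]] := (setD1P (sR _ xR), setD1P (sR _ zR)).
apply: (rfv xA zA (adj_setD1 (sR _ xR)) (adj_setD1 (sR _ zR)) (completeP cA xA zA xz)).
- by rewrite -e1 -e2 colC; exact: (rc _ _ _ _ xR uR uR zR xu uz (set2_neq _ (notin _ _ _ xu xz))).
- by rewrite -e1; exact: (rc _ _ _ _ uR xR xR zR ux xz (set2_neq _ (notin _ _ _ ux uz))).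
- by rewrite -e2; exact: (rc _ _ _ _ uR zR xR zR uz xz (set2_neq _ (notin _ _ _ ux uz))).
Qed.

End FreshVertex.

Lemma inG0_ncolors B : inG0 adj col B -> (ncolors B).+1 = #|B|.
Proof.
case=> [B1 | V1 V2 B2 _ nB _ _ _ _]; last by rewrite nB subn1 prednK // ltnW.
have := leq_trans (ncolors_le_nedges B) (nedges_le B).
by rewrite B1 bin_small // leqn0 => /eqP->.
Qed.

Lemma inG1_ncolors B : inG1 adj col B -> ncolors B <= #|B|.
Proof.
case=> [rB | V1 V2 _ _ nB _ _ _ _]; last by rewrite nB.
by have := leq_trans (ncolors_le_nedges B) (nedges_le B); rewrite (rainbow_triangle_card rB).
Qed.

Lemma rainbow_triangle_ncolors S : rainbow_triangle adj col S -> extremal 0 S ->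
  ncolors S = #|S|.
Proof.
move=> rS; have := nedges_le S; have := ncolors_le_nedges S.
have [b3 b4] : 'C(3, 2) = 3 /\ 'C(4, 2) = 6 by [].
by rewrite /extremal (rainbow_triangle_card rS) b3 b4; lia.
Qed.

Lemma rainbow_triangles_sub A B S : rainbow_triangles A = [set S] -> B \subset A ->
  rainbow_triangles B = if S \subset B then [set S] else set0.
Proof.
move=> rA sBA; apply/setP => R.
have -> : (R \in rainbow_triangles B) = (R \in rainbow_triangles A) && (R \subset B).
  rewrite !inE -andbA; congr (_ && _).
  by apply/idP/andP => [sRB|[]//]; split; first exact: subset_trans sRB sBA.
rewrite rA in_set1; case: eqP => [->|/eqP RS]; case: ifP => // _;
  by rewrite ?inE ?eqxx ?(negbTE RS).
Qed.

Lemma rainbow_triangles_partition A S X Y : rainbow_triangles A = [set S] ->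
  nonempty_partition A X Y -> S \subset X -> rainbow_triangles Y = set0.
Proof.
move=> rA npA /subsetP sSX; rewrite (rainbow_triangles_sub rA (partition_subr npA)).
case: ifP => // /subsetP sSY; have /setIdP[rS _] : S \in rainbow_triangles A by rewrite rA set11.
have [x xS] : exists x, x \in S by apply/set0Pn; rewrite -card_gt0 (rainbow_triangle_card rS).
by move: (partition_memF npA (sSX x xS)); rewrite sSY.
Qed.

Lemma inG1_sub_rainbow A S B : rainbow_triangles A = [set S] -> B \subset A ->
  inG1 adj col B -> S \subset B.
Proof.
move=> rA sBA iB; elim: iB sBA => {B} [B rB | B V1 V2 _ _ _ npB _ _ IH _] sBA.
  by have /set1P <- : B \in [set S] by rewrite -rA inE rB.
exact: subset_trans (IH (subset_trans (partition_subl npB) sBA)) (partition_subl npB).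
Qed.

Lemma rainbow_free_extremal A : rainbow_triangles A = set0 -> A != set0 -> extremal 1 A ->
  [/\ inG0 adj col A, complete A & (ncolors A).+1 = #|A|].
Proof.
elim/set_card_ind: A => A IH rA A0 ext.
have rB B : B \subset A -> rainbow_triangles B = set0.
  by move=> sBA; apply/eqP; rewrite -subset0 -rA rainbow_trianglesS.
have [A1|A2] := leqP #|A| 1.
  have iA : inG0 adj col A by apply: G0_K1; apply/eqP; rewrite eqn_leq A1 card_gt0.
  by split; [|exact: complete_card_le1 | exact: inG0_ncolors].
have rf : {in A :\: set0, forall v, rainbow_free_at A v}.
  by move=> v; apply: rainbow_free_outside; rewrite rA sub0set.
have A0' : A :\: set0 != set0 by rewrite setD0.
have [w wA0 light] := exists_light_vertex complete_set0 rf A0'.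
have rfw := rf w wA0; rewrite setD0 in wA0 light; rename wA0 into wA.
have A'0 : A :\ w != set0 by rewrite -card_gt0; rewrite (cardsD1 w A) wA in A2.
have [iA' cA' nA'] :=
  IH _ (proper_card (properD1 wA)) (rB _ (subD1set A w)) A'0 (extremalD1 wA light ext).
have [cA nA [u uA' ua]] := extremal_add_vertex (k := 1) wA rfw cA' nA' ext.
have G0A X Y : nonempty_partition A X Y -> mono X Y ->
    inG0 adj col X -> inG0 adj col Y -> inG0 adj col A.
  by move=> npA mXY; apply: G0_split npA mXY => //; rewrite -nA addKn.
split=> //.
have [[npA mA] | [w0 w0A' cw0]] := mono_pendantV (col w u) wA A'0.
  exact: G0A _ _ npA mA iA' (G0_K1 adj col (cards1 w)).
case: iA' => [A'1 | V1 V2 _ _ _ npA' mA' i1 i2].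
  have /card_le1_eqP/(_ u w0 uA' w0A') w0u : #|A :\ w| <= 1 by rewrite A'1.
  by rewrite w0u eqxx in cw0.
have ltc : (ncolors V1 + ncolors V2).+1 <= ncolors (A :\ w).
  move: nA' (partition_card npA') (inG0_ncolors i1) (inG0_ncolors i2).
  by clear; lia.
have side X Y : nonempty_partition (A :\ w) X Y -> mono X Y ->
    inG0 adj col X -> inG0 adj col Y -> {in Y, forall y, col w y != col w u} -> inG0 adj col A.
  move=> npXY mXY iX iY Ya.
  have [npA mA ltA sA extX] :=
    extend_partition (k := 1) cA wA rfw ua npXY mXY uA' erefl Ya (inG0_ncolors iX).
  have [iX' _ _] :=
    IH _ ltA (rB _ sA) (setU1_neq0 _ _) (complete_extremal (complete_sub sA cA) extX).
  exact: G0A _ _ npA mA iX' iY.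
have [Ya|Xa] := fresh_color_sideV cA wA rfw ua npA' mA' ltc (ex_intro2 _ _ w0 w0A' cw0).
  exact: side _ _ npA' mA' i1 i2 Ya.
exact: side _ _ (partition_sym npA') (mono_betweenC mA') i2 i1 Xa.
Qed.

Lemma one_rainbow_extremal A S : rainbow_triangles A = [set S] -> extremal 0 A ->
  [/\ inG1 adj col A, complete A & ncolors A = #|A|].
Proof.
elim/set_card_ind: A => A IH rA ext.
have /setIdP[rS sSA] : S \in rainbow_triangles A by rewrite rA set11.
have rB := rainbow_triangles_sub rA.
have [eSA|SA] := eqVneq S A.
  subst S; split; first exact: G1_rainbow.
    exact: rainbow_triangle_complete.
  exact: rainbow_triangle_ncolors.
have AS0 : A :\: S != set0 by rewrite setD_eq0; apply: contra SA => sAS; rewrite eqEsubset sSA.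
have rf : {in A :\: S, forall v, rainbow_free_at A v}.
  by move=> v; apply: rainbow_free_outside; rewrite rA.
have [w wAS light] := exists_light_vertex (rainbow_triangle_complete rS) rf AS0.
have rfw := rf w wAS; have /setDP[wA wS] := wAS.
have rA' : rainbow_triangles (A :\ w) = [set S] by rewrite rB ?subD1set // subsetD1 sSA wS.
have [iA' cA' nA'] := IH _ (proper_card (properD1 wA)) rA' (extremalD1 wA light ext).
have [cA nA [u uA' ua]] := extremal_add_vertex (k := 0) wA rfw cA' nA' ext.
have A4 : 3 < #|A|.
  by rewrite -(rainbow_triangle_card rS) proper_card // properEneq SA.
split=> //.
have A'0 : A :\ w != set0 by apply/set0Pn; exists u.
have [[npA mA] | [w0 w0A' cw0]] := mono_pendantV (col w u) wA A'0.
  exact: G1_split A4 cA nA npA mA iA' (G0_K1 adj col (cards1 w)).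
case: iA' => [rainbowA' | V1 V2 _ _ _ npA' mA' i1 i2].
  have := fresh_color_rainbow cA wA rfw ua rainbowA' (subxx _) uA' erefl w0A'.
  by move/eqP; rewrite (negbTE cw0).
have SV1 := inG1_sub_rainbow rA (subset_trans (partition_subl npA') (subD1set A w)) i1.
have [ltc nV1] : (ncolors V1 + ncolors V2).+1 <= ncolors (A :\ w) /\ ncolors V1 = #|V1|.
  move: (inG1_ncolors i1) (inG0_ncolors i2) nA' (partition_card npA').
  by move: (ncolors_partition_le cA' npA' mA'); clear; lia.
have [Ya|Xa] := fresh_color_sideV cA wA rfw ua npA' mA' ltc (ex_intro2 _ _ w0 w0A' cw0).
  have [npA mA ltA sA extX] := extend_partition (k := 0) cA wA rfw ua npA' mA' uA' erefl Ya nV1.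
  have rX : rainbow_triangles (w |: V1) = [set S].
    by rewrite rB // (subset_trans SV1 (subsetUr _ _)).
  have [iX _ _] := IH _ ltA rX (complete_extremal (complete_sub sA cA) extX).
  exact: G1_split A4 cA nA npA mA iX i2.
have [npA mA ltA sA extX] := extend_partition (k := 1) cA wA rfw ua
  (partition_sym npA') (mono_betweenC mA') uA' erefl Xa (inG0_ncolors i2).
have rX := rainbow_triangles_partition rA (partition_sym npA) SV1.
have [iX _ _] :=
  rainbow_free_extremal rX (setU1_neq0 _ _) (complete_extremal (complete_sub sA cA) extX).
exact: G1_split A4 cA nA (partition_sym npA) (mono_betweenC mA) i1 iX.
Qed.

End EdgeColoring.

Theorem theorem3 (T : finType) (adj : rel T) (col : T -> T -> nat) (n : nat) :
  (forall x y, adj x y = adj y x) ->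
  (forall x, ~~ adj x x) ->
  (forall x y, col x y = col y x) ->
  #|T| = n -> 3 <= n ->
  'C(n.+1, 2) <= num_edges adj + ncolors adj col [set: T] ->
  #|[set S : {set T} | rainbow_triangle adj col S]| = 1 ->
  inG1 adj col [set: T].
Proof.
move=> adjC adj_irr colC <- _ ext rainbow1.
have [S rT] : exists S, rainbow_triangles adj col [set: T] = [set S].
  by apply/cards1P; rewrite -rainbow1; apply/eqP/eq_card => S; rewrite !inE subsetT andbT.
have eT : nedges adj [set: T] = num_edges adj.
  by apply: eq_card => e; rewrite !inE subsetT andbT.
by case: (one_rainbow_extremal adjC adj_irr colC rT); rewrite /extremal ?eT ?cardsT.
Qed.
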